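(* Let $d\ge3$ and let $(X_{t,1},\dots,X_{t,d})$, $t=1,\dots,T$, be i.i.d. binary random vectors, each following a determinantal point process with correlation kernel $K_0$, where $K_0$ is real symmetric with all eigenvalues in $(0,1)$ and all entries nonzero. For a reference index $r\in\{1,\dots,d\}$, define the symmetric matrix estimator $\widehat{K}^{(r)}_T$ by: $\widehat{K}^{(r)}_{ii}=\frac1T\sum_t X_{t,i}$; for $i\ne j$, $\widehat{|K_{ij}|}=\sqrt{\widehat{K}^{(r)}_{ii}\widehat{K}^{(r)}_{jj}-\frac1T\sum_t X_{t,i}X_{t,j}}$; $\widehat{K}^{(r)}_{rj}=\widehat{K}^{(r)}_{jr}=\widehat{|K_{rj}|}$ for $j\neq r$; and for distinct $i,j\ne r$, $\widehat{K}^{(r)}_{ij}=\widehat{\mathrm{sgn}}^{(r)}_{ij}\,\widehat{|K_{ij}|}$ with $$\widehat{\mathrm{sgn}}^{(r)}_{ij}=\mathrm{sgn}\Big(\tfrac1T\textstyle\sum_t X_{t,r}X_{t,i}X_{t,j}-\widehat{K}^{(r)}_{rr}\widehat{K}^{(r)}_{ii}\widehat{K}^{(r)}_{jj}+\widehat{K}^{(r)}_{rr}\widehat{|K_{ij}|}^2+\widehat{K}^{(r)}_{ii}\widehat{|K_{rj}|}^2+\widehat{K}^{(r)}_{jj}\widehat{|K_{ri}|}^2\Big).$$ Then for any $r,r'\in\{1,\dots,d\}$, almost surely, for all $T$ large enough there exists a diagonal matrix $D$ with diagonal entries in $\{-1,1\}$ such that $\widehat{K}^{(r)}_T=D\,\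widehat{K}^{(r')}_T\,D$.
   Context: A binary random vector $(X_1,\dots,X_d)$ follows a determinantal point process with correlation kernel $K$ if $\mathbb{P}[X_j=1\ \forall j\in s]=\det K_s$ for all $s\subseteq\{1,\dots,d\}$, with $K_s$ the principal submatrix indexed by $s$. $\mathrm{sgn}(x)$ is $1,-1,0$ according as $x>0,x<0,x=0$. The estimator $\widehat{K}^{(r)}_T$ is the estimator obtained when variable $r$ is indexed as the first variable (its row is estimated as positive); on the event where its defining expressions are undefined it takes an arbitrary conventional value. *)

From HB Require Import structures.
From mathcomp Require Import all_boot all_order all_algebra.
From mathcomp Require Import all_classical all_reals all_analysis.
Set Implicit Arguments. Unset Strict Implicit. Unset Printing Implicit Defensive.
Import Order.TTheory GRing.Theory Num.Theory.
Local Open Scope ring_scope.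
Local Open Scope classical_set_scope.

Definition principal_submx (R : ringType) (d : nat) (K : 'M[R]_d)
    (s : {set 'I_d}) : 'M[R]_#|s| :=
  \matrix_(i, j) K (enum_val i) (enum_val j).

Definition is_DPP (R : realType) (dsp : measure_display) (Omega : measurableType dsp)
    (P : probability Omega R) (d : nat) (K : 'M[R]_d)
    (Y : Omega -> {ffun 'I_d -> bool}) : Prop :=
  forall s : {set 'I_d},
    P [set w | forall j, j \in s -> Y w j] = (\det (principal_submx K s))%:E.

(* mutual independence of the family (X t)_t : product rule over every
   finite subfamily and every choice of (finite, hence measurable) events *)
Definition mutually_independent (R : realType) (dsp : measure_display)
    (Omega : measurableType dsp) (P : probability Omega R) (V : finType)
    (X : nat -> Omega -> V) : Prop :=
  forall (F : seq nat) (A : nat -> {set V}), uniq F ->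
    P (\bigcap_(t in [set` F]) (X t @^-1` [set v | v \in A t]))
    = (\prod_(t <- F) P (X t @^-1` [set v | v \in A t]))%E.

Section Estimator.
Variables (R : realType) (Omega : Type) (d : nat).
Variables (X : nat -> Omega -> {ffun 'I_d -> bool}) (T : nat) (w : Omega).

Definition emp_mean (f : nat -> bool) : R := (\sum_(t < T) (f t)%:R) / T%:R.

Definition Kdiag_hat (i : 'I_d) : R := emp_mean (fun t => X t w i).

(* \hat{|K_ij|}  (Num.sqrt of a negative number is 0: conventional value) *)
Definition absK_hat (i j : 'I_d) : R :=
  Num.sqrt (Kdiag_hat i * Kdiag_hat j - emp_mean (fun t => X t w i && X t w j)).

Definition sgn_hat (r i j : 'I_d) : R :=
  Num.sg (emp_mean (fun t => [&& X t w r, X t w i & X t w j])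
          - Kdiag_hat r * Kdiag_hat i * Kdiag_hat j
          + Kdiag_hat r * absK_hat i j ^+ 2
          + Kdiag_hat i * absK_hat r j ^+ 2
          + Kdiag_hat j * absK_hat r i ^+ 2).

Definition K_hat (r : 'I_d) : 'M[R]_d :=
  \matrix_(i, j)
    if i == j then Kdiag_hat i
    else if i == r then absK_hat r j
    else if j == r then absK_hat r i
    else sgn_hat r i j * absK_hat i j.

End Estimator.

(** Every estimator is built from the empirical frequencies of the events
    [{X_i = 1 for all i in s}], [|s| <= 3], which by the strong law of large
    numbers converge almost surely to the principal minors [det K_s].
    Expanding the 3x3 minor shows that the argument of the sign estimator
    converges to [2 K_ri K_ij K_rj], which is nonzero, so for large T the
    estimated sign is exactly [sgn K_ri sgn K_ij sgn K_rj].  From then on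
    [K^(r) = D_r B D_r], where [B_ij = sgn K_ij * |K_ij|^] does not depend on r
    and [D_r = diag (sgn K_ri)] (with 1 at r); hence [K^(r) = D K^(r') D] with
    [D = D_r D_r'].  The strong law itself follows from the fourth-moment bound
    [E (sum_(i<n) (Y_i - p))^4 <= 3 n^2] and the Borel-Cantelli lemma. *)

From HB Require Import structures.
From mathcomp Require Import all_boot all_order all_algebra.
From mathcomp Require Import all_classical all_reals all_analysis.
From mathcomp Require Import ring lra zify.
Set Implicit Arguments. Unset Strict Implicit. Unset Printing Implicit Defensive.
Import Order.TTheory GRing.Theory Num.Theory.
Local Open Scope ring_scope.

(** * Fourth moment of a centered Bernoulli sum *)

Section FourIndices.
Variables (n : nat) (s t u v : 'I_n).

Definition multiplicity (i : 'I_n) : nat := (i == s) + (i == t) + (i == u) + (i == v).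

Definition pairings : nat :=
  ((s == t) && (u == v)) + ((s == u) && (t == v)) + ((s == v) && (t == u)).

Lemma pairing_of_no_singleton :
  (forall j, multiplicity j != 1%N) -> (0 < pairings)%N.
Proof.
move=> no1; move: (no1 s) (no1 t) (no1 u) (no1 v).
rewrite /multiplicity /pairings [t == s]eq_sym [u == s]eq_sym [v == s]eq_sym.
rewrite [u == t]eq_sym [v == t]eq_sym [v == u]eq_sym !eqxx.
by case: (s =P t) => ?; case: (s =P u) => ?; case: (s =P v) => ?;
  case: (t =P u) => ?; case: (t =P v) => ?; case: (u =P v) => ? //=; congruence.
Qed.

End FourIndices.

Lemma sum_pairings n :
  (\sum_(s < n) \sum_(t < n) \sum_(u < n) \sum_(v < n) pairings s t u v = 3 * n ^ 2)%N.
Proof.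
have sum_eq1 (j : 'I_n) : (\sum_i (j == i : nat) = 1)%N.
  by rewrite (bigD1 j) //= eqxx big1 // => i; rewrite eq_sym => /negbTE ->.
have sum_indicator (b : bool) (j : 'I_n) : (\sum_i (b && (j == i) : nat) = b)%N.
  by case: b; [exact: sum_eq1 | exact: big1_eq].
have sum_v (s t u : 'I_n) :
    (\sum_v pairings s t u v = (s == t) + (s == u) + (t == u))%N.
  rewrite /pairings !big_split /= !sum_indicator; congr (_ + _)%N.
  by under eq_bigr do rewrite andbC eq_sym; rewrite sum_indicator eq_sym.
have sum_u (s t : 'I_n) :
    (\sum_u ((s == t) + (s == u) + (t == u)) = (s == t) * n + 2)%N.
  by rewrite !big_split /= !sum_eq1 sum_nat_const card_ord mulnC; lia.
under eq_bigr do under eq_bigr do rewrite (eq_bigr _ (fun u _ => sum_v _ _ u)) sum_u.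
under eq_bigr do rewrite big_split /= -big_distrl /= sum_eq1 sum_nat_const card_ord.
by rewrite sum_nat_const card_ord; lia.
Qed.

Lemma exprn4_sum (R : pzSemiRingType) (I : finType) (a : I -> R) :
  (\sum_i a i) ^+ 4 = \sum_s \sum_t \sum_u \sum_v a s * a t * a u * a v.
Proof.
rewrite !exprS expr0 mulr1 mulr_suml; apply: eq_bigr => s _.
rewrite mulr_suml mulr_sumr; apply: eq_bigr => t _.
rewrite mulr_suml !mulr_sumr; apply: eq_bigr => u _.
by rewrite !mulr_sumr; apply: eq_bigr => v _; rewrite !mulrA.
Qed.

Section BernoulliMoments.
Variables (R : realFieldType) (p : R).
Hypotheses (p_ge0 : 0 <= p) (p_le1 : p <= 1).

Definition bern_weight (b : bool) : R := if b then p else 1 - p.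
Definition centered (b : bool) : R := b%:R - p.
Definition bern_moment (m : nat) : R := \sum_b bern_weight b * centered b ^+ m.

Lemma bern_weight_ge0 b : 0 <= bern_weight b.
Proof. by case: b => //=; rewrite subr_ge0. Qed.

Lemma bern_moment1 : bern_moment 1 = 0.
Proof. rewrite /bern_moment big_bool /= /bern_weight /centered /= !expr1; ring. Qed.

Lemma bern_moment_le1 m : `|bern_moment m| <= 1.
Proof.
rewrite /bern_moment big_bool /bern_weight /centered /=.
have q_ge0 : 0 <= 1 - p by rewrite subr_ge0.
rewrite (le_trans (ler_normD _ _)) // sub0r !normrM !normrX normrN !ger0_norm //.
have hp : p ^+ m <= 1 by rewrite exprn_ile1.
have hq : (1 - p) ^+ m <= 1 by rewrite exprn_ile1 // gerBl.
by have := ler_wpM2l p_ge0 hq; have := ler_wpM2l q_ge0 hp; lra.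
Qed.

Section MixedMoments.
Variables (n : nat) (s t u v : 'I_n).

Lemma bern_mixed_moment :
  \sum_(b : {ffun 'I_n -> bool}) (\prod_i bern_weight (b i)) *
     (centered (b s) * centered (b t) * centered (b u) * centered (b v))
  = \prod_i bern_moment (multiplicity s t u v i).
Proof.
have prod_centered (b : {ffun 'I_n -> bool}) j :
    \prod_i centered (b i) ^+ (i == j) = centered (b j).
  by rewrite (bigD1 j) //= eqxx big1 ?mulr1 // => i /negbTE ->.
rewrite /bern_moment bigA_distr_bigA /=; apply: eq_bigr => b _.
rewrite big_split /=; congr (_ * _).
by under eq_bigr do rewrite !exprD; rewrite !big_split /= !prod_centered.
Qed.

(* The mixed moment vanishes as soon as some index occurs exactly once. *)
Lemma bern_mixed_moment_le :
  `|\prod_i bern_moment (multiplicity s t u v i)| <= (pairings s t u v)%:R.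
Proof.
have [|] := boolP [forall j, multiplicity s t u v j != 1%N]; last first.
  rewrite negb_forall => /existsP[j]; rewrite negbK => /eqP mj.
  by rewrite (bigD1 j) //= mj bern_moment1 mul0r normr0.
move=> /forallP/pairing_of_no_singleton; rewrite -(ler1n R); apply: le_trans.
rewrite normr_prod; apply: prodr_ile1 => i _.
by rewrite normr_ge0 bern_moment_le1.
Qed.

End MixedMoments.

Lemma bern_sum_fourth_moment_le n :
  \sum_(b : {ffun 'I_n -> bool}) (\prod_i bern_weight (b i)) * (\sum_i centered (b i)) ^+ 4
  <= 3 * n%:R ^+ 2.
Proof.
under eq_bigr do rewrite exprn4_sum mulr_sumr; rewrite exchange_big /=.
under eq_bigr do under eq_bigr do rewrite mulr_sumr; under eq_bigr do rewrite exchange_big /=.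
under eq_bigr do under eq_bigr do under eq_bigr do rewrite mulr_sumr.
under eq_bigr do under eq_bigr do rewrite exchange_big /=.
under eq_bigr do under eq_bigr do under eq_bigr do under eq_bigr do rewrite mulr_sumr.
under eq_bigr do under eq_bigr do under eq_bigr do rewrite exchange_big /=.
rewrite -natrX -natrM -sum_pairings.
do 4!(rewrite natr_sum; apply: ler_sum => ? _).
by rewrite bern_mixed_moment (le_trans (ler_norm _)) ?bern_mixed_moment_le.
Qed.

End BernoulliMoments.

(** * A strong law of large numbers for i.i.d. indicators *)

Local Open Scope classical_set_scope.

Lemma ae_eventually_notin {R : realType} {dsp : measure_display} {T : measurableType dsp}
    (mu : {measure set T -> \bar R}) (F : (set T)^nat) :
  (forall k, measurable (F k)) -> (\sum_(n <oo) mu (F n) < +oo)%E ->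
  {ae mu, forall w, exists N, forall n, (N <= n)%N -> ~ F n w}.
Proof.
move=> mF summable; exists (lim_sup_set F); split.
- by apply: bigcap_measurableType => n _; apply: bigcup_measurable => j _; exact: mF.
- exact: lim_sup_set_cvg0.
move=> w /= not_eventually n _; apply: contra_notP not_eventually => notF.
by exists n => m nm Fm; apply: notF; exists m.
Qed.

Lemma sum_inv_consecutive_mul (R : realFieldType) N :
  \sum_(0 <= n < N) ((n.+1)%:R * (n.+2)%:R)^-1 = 1 - (N.+1)%:R^-1 :> R.
Proof.
elim: N => [|N IH]; first by rewrite big_geq // invr1 subrr.
by rewrite big_nat_recr //= IH; field; rewrite -natrD nat1r !pnatr_eq0.
Qed.

Lemma emp_mean_dist (R : realType) T (f : nat -> bool) (c : R) : (0 < T)%N ->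
  `|emp_mean R T f - c| = `|\sum_(t < T) ((f t)%:R - c)| / T%:R.
Proof.
move=> T0; have Tn0 : T%:R != 0 :> R by rewrite pnatr_eq0 -lt0n.
rewrite sumrB sumr_const card_ord -[c *+ T]mulr_natr /emp_mean.
by rewrite -[c in LHS](mulfK Tn0) -mulrBl normrM normfV [`|T%:R|]ger0_norm.
Qed.

Lemma emp_mean_ge0_le1 (R : realType) T (f : nat -> bool) : 0 <= emp_mean R T f <= 1.
Proof.
rewrite /emp_mean divr_ge0 ?sumr_ge0 //=; have [->|T0] := posnP T.
  by rewrite big_ord0 mul0r.
rewrite ler_pdivrMr ?ltr0n // mul1r -[T in T%:R]card_ord -sumr_const.
by apply: ler_sum => t _; case: (f t).
Qed.

Section StrongLaw.
Context {R : realType} {dsp : measure_display} {Omega : measurableType dsp}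
  (P : probability Omega R) {V : finType} (X : nat -> Omega -> V).
Hypothesis mX : forall t v, measurable (X t @^-1` [set v]).
Hypothesis indep : mutually_independent P X.
Variables (S : {set V}) (p : R).
Hypothesis PS : forall t, P (X t @^-1` [set v | v \in S]) = p%:E.

Lemma measurable_preimage t (A : {set V}) : measurable (X t @^-1` [set v | v \in A]).
Proof.
have -> : X t @^-1` [set v | v \in A] = \bigcup_(v in [set v | v \in A]) X t @^-1` [set v].
  by apply/seteqP; split => w /=; [exists (X t w) | case=> v /= + ->].
by apply: fin_bigcup_measurable => // v _; exact: finite_finset.
Qed.

Lemma hit_prob_ge0 : 0 <= p.
Proof. by rewrite -lee_fin -(PS 0). Qed.

Lemma hit_prob_le1 : p <= 1.
Proof. by rewrite -lee_fin -(PS 0); apply: probability_le1; exact: measurable_preimage. Qed.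

Definition hits n w : {ffun 'I_n -> bool} := [ffun i : 'I_n => X i w \in S].

Definition hit_pattern n (b : {ffun 'I_n -> bool}) (t : nat) : {set V} :=
  if insub t is Some i then (if b i then S else ~: S) else [set: V]%SET.

Lemma hits_eq_bigcap n (b : {ffun 'I_n -> bool}) : [set w | hits n w = b] =
  \bigcap_(t in [set` iota 0 n]) X t @^-1` [set v | v \in hit_pattern b t].
Proof.
apply/seteqP; split => w /=.
  move=> <- t /=; rewrite mem_iota add0n => /andP[_ tn].
  by rewrite /hit_pattern insubT /= ffunE; case: ifP => //; rewrite inE => ->.
move=> H; apply/ffunP => i; rewrite ffunE.
have := H i; rewrite /= mem_iota add0n ltn_ord => /(_ isT).
by rewrite /hit_pattern valK; case: (b i) => //; rewrite inE => /negbTE.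
Qed.

Lemma measurable_hits_eq n b : measurable [set w | hits n w = b].
Proof.
by rewrite hits_eq_bigcap; apply: bigcap_measurableType => t _; exact: measurable_preimage.
Qed.

Lemma prob_hits_eq n b : P [set w | hits n w = b] = (\prod_i bern_weight p (b i))%:E.
Proof.
rewrite hits_eq_bigcap indep ?iota_uniq // -prodEFin.
have -> : iota 0 n = index_iota 0 n by rewrite /index_iota subn0.
rewrite big_mkord; apply: eq_bigr => i _; rewrite /hit_pattern valK /bern_weight.
case: (b i); first exact: PS.
have -> : X i @^-1` [set v | v \in ~: S] = ~` (X i @^-1` [set v | v \in S]).
  by apply/seteqP; split => w /=; rewrite inE => /negP.
by rewrite probability_setC ?PS //; exact: measurable_preimage.
Qed.

Lemma hits_eq_bigcup n (g : pred {ffun 'I_n -> bool}) :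
  [set w | g (hits n w)] = \bigcup_(b in [set b | g b]) [set w | hits n w = b].
Proof. by apply/seteqP; split => w /=; [exists (hits n w) | case=> b /= + ->]. Qed.

Lemma measurable_hits n (g : pred {ffun 'I_n -> bool}) : measurable [set w | g (hits n w)].
Proof.
rewrite hits_eq_bigcup; apply: fin_bigcup_measurable => [|b _]; last exact: measurable_hits_eq.
exact: finite_finset.
Qed.

Lemma prob_hits n (g : pred {ffun 'I_n -> bool}) :
  P [set w | g (hits n w)] = (\sum_(b | g b) \prod_i bern_weight p (b i))%:E.
Proof.
rewrite hits_eq_bigcup measure_fin_bigcup; first last.
- by move=> b _; exact: measurable_hits_eq.
- by move=> b c _ _ [w [/= <- <-]].
- exact: finite_finset.
rewrite (fsbigE (enum g)) ?enum_uniq //; last 2 first.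
- by move=> b /=; rewrite mem_enum.
- by move=> b /= gb /negP[]; rewrite mem_enum.
under eq_bigl do rewrite mem_setE.
rewrite big_enum_cond /=; under eq_bigr do rewrite prob_hits_eq.
by rewrite sumEFin; congr _%:E; apply: eq_bigl => b; rewrite andbb.
Qed.

(* Markov's inequality for the fourth power of the centered sum. *)
Lemma prob_deviation_le n (c : R) : 0 < c ->
  (P [set w | (c <= `|\sum_(i < n) centered p (hits n w i)|)%R]
   <= (3 * n%:R ^+ 2 / c ^+ 4)%:E)%E.
Proof.
move=> c0; have := prob_hits (fun b => c <= `|\sum_i centered p (b i)|).
move=> /= ->; rewrite lee_fin ler_pdivlMr ?exprn_gt0 // mulr_suml.
have p0 := hit_prob_ge0; have p1 := hit_prob_le1.
apply: le_trans (bern_sum_fourth_moment_le p0 p1 n).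
have weight_ge0 (b : {ffun 'I_n -> bool}) : 0 <= \prod_i bern_weight p (b i).
  by apply: prodr_ge0 => i _; exact: bern_weight_ge0.
rewrite big_mkcond /=; apply: ler_sum => b _; case: ifP => [dev|_].
  rewrite ler_wpM2l // -[X in _ <= X]ger0_norm ?exprn_even_ge0 // normrX.
  by apply: lerXn2r; rewrite // nnegrE ?normr_ge0 ?(ltW c0).
by rewrite mulr_ge0 ?exprn_even_ge0.
Qed.

Lemma ae_emp_mean_close (δ : R) : 0 < δ ->
  {ae P, forall w, exists N, forall T, (N <= T)%N ->
     `|emp_mean R T (fun t => X t w \in S) - p| < δ}.
Proof.
move=> δ0; pose dev n (b : {ffun 'I_n -> bool}) := n%:R * δ <= `|\sum_i centered p (b i)|.
pose F k := [set w | dev k.+1 (hits k.+1 w)].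
have mF k : measurable (F k) by exact: measurable_hits.
(* [3 n^2 / (n δ)^4 <= 6 / (δ^4 n (n + 1))], a telescoping bound. *)
have PF k : (P (F k) <= (6 / δ ^+ 4 * ((k.+1)%:R * (k.+2)%:R)^-1)%:E)%E.
  apply: le_trans (prob_deviation_le _ _) _; first by rewrite mulr_gt0.
  rewrite lee_fin -[k.+2]addn1 natrD; set x := k.+1%:R.
  have x1 : 1 <= x by rewrite ler1n.
  have -> : 3 * x ^+ 2 / (x * δ) ^+ 4 =
      6 / δ ^+ 4 * (x * (x + 1))^-1 * ((x + 1) / (2 * x)).
    by field; rewrite gt_eqF //=; apply/andP; split; apply: lt0r_neq0; lra.
  have x0 : 0 < x * (x + 1) by apply: mulr_gt0; lra.
  rewrite ler_piMr ?mulr_ge0 ?invr_ge0 ?exprn_ge0 ?(ltW δ0) ?(ltW x0) //.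
  by rewrite ler_pdivrMr; lra.
have summable : (\sum_(k <oo) P (F k) < +oo)%E.
  apply: (le_lt_trans _ (ltry (6 / δ ^+ 4))).
  apply: lime_le; first by apply: is_cvg_nneseries => k _ _; exact: measure_ge0.
  apply: nearW => N.
  apply: (@le_trans _ _ (\sum_(0 <= k < N) (6 / δ ^+ 4 / ((k.+1)%:R * (k.+2)%:R))%:E)%E).
    by apply: lee_sum => k _; exact: PF.
  rewrite sumEFin lee_fin -mulr_sumr sum_inv_consecutive_mul ler_piMr //.
    by rewrite divr_ge0 ?exprn_ge0 ?ltW.
apply: filterS (ae_eventually_notin mF summable) => w [N notF].
exists N.+1 => T NT; have T0 : (0 < T)%N by apply: leq_trans NT.
rewrite emp_mean_dist // ltr_pdivrMr ?ltr0n //.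
rewrite (eq_bigr (fun t => centered p (hits T w t))) => [|t _]; last first.
  by rewrite /centered ffunE.
move: (notF T.-1); rewrite -ltnS prednK // => /(_ NT) /negP.
by rewrite /F /dev /= prednK // -ltNge mulrC.
Qed.

End StrongLaw.

(** * Low-order principal minors *)

Local Close Scope classical_set_scope.

Section SmallDeterminants.
Variable R : comNzRingType.

Lemma det_mx22_nat (A : 'M[R]_2) (a : nat -> nat -> R) :
  (forall i j : 'I_2, A i j = a i j) -> \det A = a 0 0 * a 1 1 - a 0 1 * a 1 0.
Proof.
move=> HA; rewrite (expand_det_row _ 0) !big_ord_recl big_ord0 /cofactor !det_mx11.
by rewrite !mxE !HA /= expr0 expr1; ring.
Qed.

Lemma det_mx22 (A : 'M[R]_2) : \det A = A 0 0 * A 1 1 - A 0 1 * A 1 0.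
Proof.
rewrite (@det_mx22_nat _ (fun i j => A (inord i) (inord j))) => [|i j]; last by rewrite !inord_val.
by congr (A _ _ * A _ _ - A _ _ * A _ _); apply/val_inj; rewrite /= inordK.
Qed.

Lemma det_mx33_nat (A : 'M[R]_3) (a : nat -> nat -> R) :
  (forall i j : 'I_3, A i j = a i j) ->
  \det A = a 0 0 * a 1 1 * a 2 2 + a 0 1 * a 1 2 * a 2 0 + a 0 2 * a 1 0 * a 2 1
         - a 0 0 * a 1 2 * a 2 1 - a 0 1 * a 1 0 * a 2 2 - a 0 2 * a 1 1 * a 2 0.
Proof.
move=> HA; rewrite (expand_det_row _ 0) !big_ord_recl big_ord0 /cofactor !det_mx22.
by rewrite !mxE !HA /= /bump /= expr0 expr1 expr2; ring.
Qed.

End SmallDeterminants.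

Section PrincipalMinors.
Variables (R : comNzRingType) (d : nat) (K : 'M[R]_d).
Hypothesis K_sym : forall i j, K i j = K j i.

Definition principal_minor (s : {set 'I_d}) : R := \det (principal_submx K s).

Lemma principal_minor_enum (s : {set 'I_d}) n (i0 : 'I_d) : #|s| = n ->
  exists2 A : 'M[R]_n, principal_minor s = \det A &
    forall x y : 'I_n, A x y = K (nth i0 (enum s) x) (nth i0 (enum s) y).
Proof. by move=> <-; exists (principal_submx K s) => // x y; rewrite mxE !(enum_val_nth i0). Qed.

Lemma nth_enum_mem (s : {set 'I_d}) (i0 : 'I_d) k : (k < #|s|)%N -> nth i0 (enum s) k \in s.
Proof. by move=> ks; rewrite -mem_enum mem_nth // -cardE. Qed.

Lemma nth_enum_neq (s : {set 'I_d}) (i0 : 'I_d) k l :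
  (k < #|s|)%N -> (l < #|s|)%N -> k != l -> nth i0 (enum s) k != nth i0 (enum s) l.
Proof. by move=> ks ls; rewrite nth_uniq ?enum_uniq // -cardE. Qed.

Lemma principal_minor1 i : principal_minor [set i] = K i i.
Proof.
have [A -> HA] := principal_minor_enum i (cards1 i).
have := nth_enum_mem i (s := [set i]) (k := 0); rewrite cards1 inE => /(_ isT) /eqP.
by rewrite det_mx11 HA => ->.
Qed.

Lemma principal_minor2 i j : i != j ->
  principal_minor [set i; j] = K i i * K j j - K i j ^+ 2.
Proof.
move=> ij; have s2 : #|[set i; j]| = 2 by rewrite cards2 ij.
have [A -> HA] := principal_minor_enum i s2.
pose e := nth i (enum [set i; j]).
rewrite (det_mx22_nat (a := fun k l => K (e k) (e l))) //.
have := nth_enum_mem i (s := [set i; j]); have := nth_enum_neq i (s := [set i; j]).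
rewrite -/e s2 => neq mem; move: (mem 0%N isT) (mem 1%N isT) (neq 0%N 1%N isT isT isT).
by rewrite !inE => /orP[]/eqP-> /orP[]/eqP->; rewrite ?eqxx // => _; rewrite ?[K j i]K_sym; ring.
Qed.

Lemma principal_minor3 r i j : r != i -> r != j -> i != j ->
  principal_minor [set r; i; j] =
    K r r * K i i * K j j + 2 * (K r i * K i j * K r j)
    - K r r * K i j ^+ 2 - K i i * K r j ^+ 2 - K j j * K r i ^+ 2.
Proof.
move=> ri rj ij; have s3 : #|[set r; i; j]| = 3.
  by rewrite -finset.setUA cardsU1 cards2 ij !inE negb_or ri rj.
have [A -> HA] := principal_minor_enum r s3.
pose e := nth r (enum [set r; i; j]).
rewrite (det_mx33_nat (a := fun k l => K (e k) (e l))) //.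
have := nth_enum_mem r (s := [set r; i; j]); have := nth_enum_neq r (s := [set r; i; j]).
rewrite -/e s3 => neq mem.
move: (mem 0%N isT) (mem 1%N isT) (mem 2%N isT) (neq 0%N 1%N isT isT isT)
  (neq 0%N 2%N isT isT isT) (neq 1%N 2%N isT isT isT).
rewrite !inE -!orbA => /or3P[]/eqP-> /or3P[]/eqP-> /or3P[]/eqP->;
  rewrite ?eqxx // => _ _ _; rewrite ?[K i r]K_sym ?[K j r]K_sym ?[K j i]K_sym; ring.
Qed.

End PrincipalMinors.

(** * Consistency of the sign estimator *)

Lemma dist_sqr_sqrtr_le (R : rcfType) (x y : R) : 0 <= y ->
  `|Num.sqrt x ^+ 2 - y| <= `|x - y|.
Proof.
move=> y0; case: (leP 0 x) => x0; first by rewrite sqr_sqrtr.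
by rewrite ltr0_sqrtr // expr0n /= sub0r normrN ger0_norm // ler0_norm; lra.
Qed.

Lemma dist_mulr_le (R : realDomainType) (a b a' b' : R) : `|a| <= 1 -> `|b'| <= 1 ->
  `|a * b - a' * b'| <= `|a - a'| + `|b - b'|.
Proof.
move=> a1 b1; have -> : a * b - a' * b' = a * (b - b') + b' * (a - a') by ring.
apply: le_trans (ler_normD _ _) _; rewrite !normrM.
have := normr_ge0 (b - b'); have := normr_ge0 (a - a'); nra.
Qed.
Arguments dist_mulr_le {R} a b a' b'.

Lemma sgr_eq_of_dist_lt (R : realDomainType) (x y : R) : `|x - y| < `|y| -> Num.sg x = Num.sg y.
Proof.
case: (ltrgtP y 0) => y0; last by rewrite y0 normr0 ltNge normr_ge0.
- by rewrite [`|y|]ltr0_norm // ltr_norml => /andP[? ?]; rewrite !ltr0_sg //; lra.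
- by rewrite [`|y|]gtr0_norm // ltr_norml => /andP[? ?]; rewrite !gtr0_sg //; lra.
Qed.

Section SignStatistic.
Variables (R : rcfType) (d : nat) (K : 'M[R]_d) (m : {set 'I_d} -> R) (δ : R).
Hypothesis K_sym : forall i j, K i j = K j i.
Hypothesis m01 : forall s, 0 <= m s <= 1.
Hypothesis minor01 : forall s, 0 <= principal_minor K s <= 1.
Hypothesis m_close : forall s, `|m s - principal_minor K s| <= δ.

(* With [m s] replaced by [det K_s], [principal_minor3] turns this into
   [2 K_ri K_ij K_rj]. *)
Definition sign_statistic (r i j : 'I_d) : R :=
  m [set r; i; j] - m [set r] * m [set i] * m [set j]
  + m [set r] * Num.sqrt (m [set i] * m [set j] - m [set i; j]) ^+ 2
  + m [set i] * Num.sqrt (m [set r] * m [set j] - m [set r; j]) ^+ 2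
  + m [set j] * Num.sqrt (m [set r] * m [set i] - m [set r; i]) ^+ 2.

Let norm_le1 (x : R) : 0 <= x <= 1 -> `|x| <= 1.
Proof. by case/andP=> x0 x1; rewrite ger0_norm. Qed.

Let m1_close i : `|m [set i] - K i i| <= δ.
Proof. by rewrite -principal_minor1. Qed.

Lemma diag_entry_le1 i : 0 <= K i i <= 1.
Proof. by rewrite -principal_minor1. Qed.

Lemma sqr_entry_le1 i j : i != j -> `|K i j ^+ 2| <= 1.
Proof.
move=> ij; have := minor01 [set i; j]; rewrite principal_minor2 // => /andP[+ _].
have /andP[i0 i1] := diag_entry_le1 i; have /andP[j0 j1] := diag_entry_le1 j.
by rewrite ger0_norm ?sqr_ge0 //; nra.
Qed.

Lemma dist_mul_sqrt_le k i j : i != j ->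
  `|m [set k] * Num.sqrt (m [set i] * m [set j] - m [set i; j]) ^+ 2 - K k k * K i j ^+ 2|
  <= 4 * δ.
Proof.
move=> ij; have mij := m_close [set i; j]; rewrite principal_minor2 // in mij.
have := dist_sqr_sqrtr_le (m [set i] * m [set j] - m [set i; j]) (sqr_ge0 (K i j)).
have := dist_mulr_le _ (m [set j]) (K i i) _ (norm_le1 (m01 [set i])) (norm_le1 (diag_entry_le1 j)).
have := dist_mulr_le _ (Num.sqrt (m [set i] * m [set j] - m [set i; j]) ^+ 2) (K k k) _
  (norm_le1 (m01 [set k])) (sqr_entry_le1 ij).
have := ler_normB (m [set i] * m [set j] - K i i * K j j)
  (m [set i; j] - (K i i * K j j - K i j ^+ 2)).
have := m1_close i; have := m1_close j; have := m1_close k.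
have -> : m [set i] * m [set j] - m [set i; j] - K i j ^+ 2 =
  (m [set i] * m [set j] - K i i * K j j) - (m [set i; j] - (K i i * K j j - K i j ^+ 2)).
  by ring.
lra.
Qed.

Lemma dist_diag_product_le r i j :
  `|m [set r] * m [set i] * m [set j] - K r r * K i i * K j j| <= 3 * δ.
Proof.
have mri : `|m [set r] * m [set i]| <= 1.
  by rewrite normrM -[1]mulr1 ler_pM ?norm_le1.
have := dist_mulr_le _ (m [set i]) (K r r) _ (norm_le1 (m01 [set r])) (norm_le1 (diag_entry_le1 i)).
have := dist_mulr_le _ (m [set j]) (K r r * K i i) _ mri (norm_le1 (diag_entry_le1 j)).
have := m1_close r; have := m1_close i; have := m1_close j; lra.
Qed.

Lemma dist_sign_statistic_le r i j : r != i -> r != j -> i != j ->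
  `|sign_statistic r i j - 2 * (K r i * K i j * K r j)| <= 16 * δ.
Proof.
move=> ri rj ij; have := m_close [set r; i; j]; rewrite principal_minor3 //.
have := dist_mul_sqrt_le r ij; have := dist_mul_sqrt_le i rj; have := dist_mul_sqrt_le j ri.
have := dist_diag_product_le r i j; rewrite /sign_statistic !ler_norml.
move=> /andP[? ?] /andP[? ?] /andP[? ?] /andP[? ?] /andP[? ?].
by rewrite ?[K i r]K_sym; apply/andP; split; lra.
Qed.

Lemma sgr_sign_statistic r i j : r != i -> r != j -> i != j ->
  8 * δ < `|K r i * K i j * K r j| ->
  Num.sg (sign_statistic r i j) = Num.sg (K r i) * Num.sg (K i j) * Num.sg (K r j).
Proof.
move=> ri rj ij large; rewrite -!sgrM -[RHS]mul1r -(gtr0_sg (ltr0n R 2)) -sgrM.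
apply: sgr_eq_of_dist_lt; apply: le_lt_trans (dist_sign_statistic_le ri rj ij) _.
by rewrite normrM ger0_norm //; lra.
Qed.

End SignStatistic.

Section EstimatorDecomposition.
Variables (R : realType) (Omega : Type) (d : nat) (K : 'M[R]_d).
Variables (X : nat -> Omega -> {ffun 'I_d -> bool}) (T : nat) (w : Omega) (δ : R).

Definition emp_moment (s : {set 'I_d}) : R :=
  emp_mean R T (fun t => [forall j in s, X t w j]).

Lemma Kdiag_hat_moment i : Kdiag_hat R X T w i = emp_moment [set i].
Proof.
congr emp_mean; apply: funext => t.
by apply/idP/forall_inP => [? k /set1P -> // | /(_ i (set11 i))].
Qed.

Lemma emp_mean_pair i j : emp_mean R T (fun t => X t w i && X t w j) = emp_moment [set i; j].
Proof.
congr emp_mean; apply: funext => t.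
apply/andP/forall_inP => [[? ?] k | all_in]; first by rewrite !inE => /orP[] /eqP ->.
by split; apply: all_in; rewrite !inE eqxx ?orbT.
Qed.

Lemma emp_mean_triple r i j :
  emp_mean R T (fun t => [&& X t w r, X t w i & X t w j]) = emp_moment [set r; i; j].
Proof.
congr emp_mean; apply: funext => t.
apply/and3P/forall_inP => [[? ? ?] k | all_in]; first by rewrite !inE -!orbA => /or3P[] /eqP ->.
by split; apply: all_in; rewrite !inE eqxx ?orbT.
Qed.

Lemma absK_hat_sym i j : absK_hat R X T w i j = absK_hat R X T w j i.
Proof.
rewrite /absK_hat mulrC; congr (Num.sqrt (_ - _)); congr emp_mean.
by apply: funext => t; rewrite andbC.
Qed.

Lemma sgn_hat_statistic r i j : sgn_hat R X T w r i j = Num.sg (sign_statistic emp_moment r i j).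
Proof. by rewrite /sgn_hat /absK_hat !Kdiag_hat_moment !emp_mean_pair emp_mean_triple. Qed.

Hypothesis K_sym : forall i j, K i j = K j i.
Hypothesis K_neq0 : forall i j, K i j != 0.

Definition sign_flip (r i : 'I_d) : R := if i == r then 1 else Num.sg (K r i).

Definition signed_K_hat (i j : 'I_d) : R :=
  if i == j then Kdiag_hat R X T w i else Num.sg (K i j) * absK_hat R X T w i j.

Lemma sgr_entry_sqr i j : Num.sg (K i j) ^+ 2 = 1.
Proof. by rewrite sqr_sg K_neq0. Qed.

Lemma sign_flip_sqr r i : sign_flip r i ^+ 2 = 1.
Proof. by rewrite /sign_flip; case: ifP; rewrite ?expr1n ?sgr_entry_sqr. Qed.

Lemma sign_flip_pm1 r i : sign_flip r i = 1 \/ sign_flip r i = -1.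
Proof.
rewrite /sign_flip; case: ifP => _; first by left.
by case: sgrP (K_neq0 r i) => _; rewrite ?eqxx //; [left | right].
Qed.

Hypothesis minor01 : forall s, 0 <= principal_minor K s <= 1.
Hypothesis large : forall r i j, 8 * δ < `|K r i * K i j * K r j|.
Hypothesis close : forall s, `|emp_moment s - principal_minor K s| <= δ.

Lemma sgn_hat_consistent r i j : r != i -> r != j -> i != j ->
  sgn_hat R X T w r i j = Num.sg (K r i) * Num.sg (K i j) * Num.sg (K r j).
Proof.
move=> ri rj ij; rewrite sgn_hat_statistic; apply: sgr_sign_statistic => //.
by move=> s; exact: emp_mean_ge0_le1.
Qed.

Lemma K_hat_sign_flip r :
  K_hat R X T w r = \matrix_(i, j) (sign_flip r i * sign_flip r j * signed_K_hat i j).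
Proof.
apply/matrixP => i j; rewrite !mxE /signed_K_hat /sign_flip.
have [<-|ij] := eqVneq i j; first by case: ifP; rewrite ?mul1r // -expr2 sgr_entry_sqr mul1r.
have [ir|ir] := eqVneq i r.
  by move: ij; rewrite ir eq_sym => /negbTE ->; rewrite mul1r mulrA -expr2 sgr_entry_sqr mul1r.
have [jr|jr] := eqVneq j r.
  by rewrite jr mulr1 mulrA [K i r]K_sym absK_hat_sym -expr2 sgr_entry_sqr mul1r.
rewrite sgn_hat_consistent; [|by rewrite eq_sym..|by []].
by ring.
Qed.

Lemma K_hat_similar r r' : exists D : 'I_d -> R, (forall i, D i = 1 \/ D i = -1) /\
  K_hat R X T w r = diag_mx (\row_i D i) *m K_hat R X T w r' *m diag_mx (\row_i D i).
Proof.
exists (fun i => sign_flip r i * sign_flip r' i); split.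
  move=> i; case: (sign_flip_pm1 r i) => ->; case: (sign_flip_pm1 r' i) => ->;
  rewrite ?mulr1 ?mulrN1 ?opprK; [left | right | right | left] => //.
rewrite !K_hat_sign_flip; apply/matrixP => i j; rewrite mul_diag_mx mul_mx_diag !mxE.
by rewrite -[LHS]mulr1 -(sign_flip_sqr r' i) -[LHS]mulr1 -(sign_flip_sqr r' j); ring.
Qed.

End EstimatorDecomposition.

Lemma exists_lt_all (R : realFieldType) (I : finType) (f : I -> R) :
  (forall i, 0 < f i) -> exists2 e : R, 0 < e & forall i, e < f i.
Proof.
move=> f0; pose mu := \big[Order.min/1]_i f i.
have mu0 : 0 < mu by apply: lt_bigmin.
exists (mu / 2); first by rewrite divr_gt0.
move=> i; apply: lt_le_trans (bigmin_le 1 i f); rewrite -/mu; lra.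
Qed.

Local Open Scope classical_set_scope.

Theorem proposition6 (R : realType) (dsp : measure_display)
  (Omega : measurableType dsp) (P : probability Omega R)
  (d : nat) (K0 : 'M[R]_d)
  (X : nat -> Omega -> {ffun 'I_d -> bool}) (r r' : 'I_d) :
  (3 <= d)%N ->
  K0^T = K0 ->
  (forall a : R, eigenvalue K0 a -> 0 < a < 1) ->
  (forall i j, K0 i j != 0) ->
  (forall t (v : {ffun 'I_d -> bool}), measurable (X t @^-1` [set v])) ->
  (forall t, is_DPP P K0 (X t)) ->
  mutually_independent P X ->
  {ae P, forall w, exists N : nat, forall T : nat, (N <= T)%N ->
     exists D : 'I_d -> R, (forall i, D i = 1 \/ D i = -1) /\
       @K_hat R _ _ X T w r = diag_mx (\row_i D i) *m @K_hat R _ _ X T w r' *m diag_mx (\row_i D i)}.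
Proof.
move=> _ K0_tr _ K0_neq0 mX DPP indep.
have K0_sym i j : K0 i j = K0 j i by rewrite -{1}K0_tr mxE.
pose all_in (s : {set 'I_d}) := [set v : {ffun 'I_d -> bool} | [forall j in s, v j]]%SET.
have PS s t : P (X t @^-1` [set v | v \in all_in s]) = (principal_minor K0 s)%:E.
  rewrite -(DPP t); congr (P _); apply/seteqP; split => w /=; rewrite inE.
    by move/forall_inP.
  by move=> ?; apply/forall_inP.
have minor01 s : 0 <= principal_minor K0 s <= 1.
  by rewrite (hit_prob_ge0 (PS s)) (hit_prob_le1 mX (PS s)).
have [δ δ0 large] : exists2 δ : R, 0 < δ &
    forall x : 'I_d * 'I_d * 'I_d, δ < `|K0 x.1.1 x.1.2 * K0 x.1.2 x.2 * K0 x.1.1 x.2| / 8.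
  by apply: exists_lt_all => x; rewrite divr_gt0 // normr_gt0 !mulf_neq0.
have := filter_forall (ae_filter_ringOfSetsType P) (fun s => ae_emp_mean_close mX indep (PS s) δ0).
apply: filterS => w /fin_all_exists[N close].
exists (\max_s N s) => T NT; apply: (K_hat_similar (δ := δ)) => //.
- by move=> i j k; have := large (i, j, k); rewrite ltr_pdivlMr //= mulrC.
- move=> s; have -> : emp_moment R X T w s = emp_mean R T (fun t => X t w \in all_in s).
    by congr emp_mean; apply: funext => t; rewrite inE.
  exact/ltW/close/(leq_trans (leq_bigmax s)).
Qed.
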